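(* Let $n\geq2$, and let $f,g:[0,\infty)\to[0,\infty)$ be continuous, log-concave functions, $C^2$-smooth on $(0,\infty)$, such that $f(0)>0$, $g(0)>0$ and $\int f<\infty$, $\int g<\infty$. Assume that for any $t\geq0$, $$ |f(t)-g(t)|\leq e^{-5n}\min\{f(0),g(0)\}. $$ Then $(1-e^{-n})t_n(g)\leq t_n(f)\leq(1+e^{-n})t_n(g)$.
   Context: For a continuous log-concave function $h:[0,\infty)\to[0,\infty)$, $C^2$-smooth on $(0,\infty)$, with $0<\int_0^\infty h<\infty$, and for $p>1$, $t_p(h)$ denotes the unique $t>0$ such that $h(t)>0$ and $h'(t)/h(t)=-(p-1)/t$ (under these assumptions such $t$ exists and is unique). A function $h\ge 0$ is log-concave if $h(\lambda x+(1-\lambda)y)\geq h(x)^\lambda h(y)^{1-\lambda}$. *)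

From Stdlib Require Import Reals Lra.
From Coquelicot Require Import Coquelicot.
Open Scope R_scope.

Definition rpow (a b : R) : R :=
  if Rlt_dec 0 a then Rpower a b
  else if Req_EM_T b 0 then 1 else 0.

(* h : [0,oo) -> [0,oo) (values of h on negative reals are irrelevant). *)
Definition nonneg_on_halfline (h : R -> R) : Prop :=
  forall t, 0 <= t -> 0 <= h t.

Definition continuous_on_halfline (h : R -> R) : Prop :=
  forall t, 0 <= t ->
    filterlim h (within (fun x => 0 <= x) (locally t)) (locally (h t)).

Definition log_concave_on_halfline (h : R -> R) : Prop :=
  forall x y l, 0 <= x -> 0 <= y -> 0 <= l <= 1 ->
    rpow (h x) l * rpow (h y) (1 - l) <= h (l * x + (1 - l) * y).

Definition C2_on_pos (h : R -> R) : Prop :=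
  forall t, 0 < t -> ex_derive_n h 2 t /\ continuous (Derive_n h 2) t.

Definition finite_positive_integral (h : R -> R) : Prop :=
  exists I, is_RInt_gen h (at_point 0) (Rbar_locally p_infty) I /\ 0 < I.

Definition is_t_p (p : R) (h : R -> R) (t : R) : Prop :=
  0 < t /\ 0 < h t /\ Derive h t / h t = - (p - 1) / t.

From Stdlib Require Import Reals Lra Lia Psatz.
From Coquelicot Require Import Coquelicot.
Open Scope R_scope.

(* ln h is concave, so the difference quotients of h at t are squeezed between h t times
   the slopes of ln h to the left and to the right of t.  Hence
   h s <= h t * exp (h'(t)/h(t) * (s - t)) for all s >= 0, which at t = t_p(h) reads
   h s <= h t * exp (-(p-1)(s-t)/t).  Evaluating this bound for f at t_g and for g at t_f,
   and using |f - g| <= eta * min (f t_f) (g t_g) with eta = e^(-4n-1) (as h 0 <=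
   e^(n-1) h t_n(h)), gives (1-eta)^2 <= exp (-(n-1) X) <= 1/(1+X) for
   X = (t_g - t_f)^2/(t_f t_g).  So X <= 3 eta <= e^(-2n)/2, which forces
   |t_f - t_g| <= e^(-n) t_g. *)

Lemma exp_le_exp x y : x <= y -> exp x <= exp y.
Proof. intros [Hlt | ->]; [now left; apply exp_increasing | lra]. Qed.

Lemma one_add_mul_exp_neg_le1 x : (1 + x) * exp (- x) <= 1.
Proof.
  pose proof (exp_ineq1_le x). pose proof (exp_pos x).
  rewrite exp_Ropp. apply Rle_div_l; lra.
Qed.

Lemma exp_sub1_le_mul_exp y : exp y - 1 <= y * exp y.
Proof.
  pose proof (one_add_mul_exp_neg_le1 (- y)) as H.
  rewrite Ropp_involutive in H. lra.
Qed.

Lemma le_mul_exp_of_ln_le x y c : 0 < x -> 0 < y -> ln x <= ln y + c -> x <= y * exp c.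
Proof.
  intros Hx Hy H.
  rewrite <- (exp_ln x), <- (exp_ln y), <- exp_plus by assumption.
  now apply exp_le_exp.
Qed.

Lemma is_lim_seq_mul_exp_inv_seq c s :
  is_lim_seq (fun k => c * exp (/ (INR k + 1) * s)) c.
Proof.
  replace (Finite c) with (Rbar_mult c (exp (0 * s)))
    by (simpl; rewrite Rmult_0_l, exp_0; f_equal; ring).
  apply is_lim_seq_scal_l, (is_lim_seq_continuous (fun x => exp (x * s))).
  - apply continuity_pt_filterlim.
    apply (ex_derive_continuous (fun x => exp (x * s))). auto_derive. auto.
  - eapply is_lim_seq_ext; [|apply (is_lim_seq_Rbar_loc_seq (Finite 0))].
    intros k. simpl. ring.
Qed.

Definition ln_slope (h : R -> R) (a b : R) : R := (ln (h b) - ln (h a)) / (b - a).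

Definition diff_quot_seq (h : R -> R) (t : R) (k : nat) : R :=
  (h (t + / (INR k + 1)) - h t) / / (INR k + 1).

Lemma Derive_eq_Lim_diff_quot_seq h t :
  Derive h t = real (Lim_seq (diff_quot_seq h t)).
Proof.
  unfold Derive, Lim. f_equal. apply Lim_seq_ext. intros k.
  unfold diff_quot_seq. simpl. now rewrite Rplus_0_l.
Qed.

Lemma real_le_of_Rbar_le (x : Rbar) c : Rbar_le x (Finite c) -> real x <> 0 -> real x <= c.
Proof. destruct x; simpl; tauto. Qed.

Lemma le_real_of_Rbar_le (x : Rbar) c : Rbar_le (Finite c) x -> real x <> 0 -> c <= real x.
Proof. destruct x; simpl; tauto. Qed.

Section LogConcave.

Variable h : R -> R.
Hypothesis h_nonneg : nonneg_on_halfline h.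
Hypothesis h_lc : log_concave_on_halfline h.

Lemma log_concave_ln_chord x y z : 0 <= x -> x <= y <= z -> 0 < h x -> 0 < h z ->
  0 < h y /\ (z - y) * ln (h x) + (y - x) * ln (h z) <= (z - x) * ln (h y).
Proof.
  intros Hx Hxyz Hhx Hhz.
  destruct (Req_dec x z) as [<- | Hxz].
  { replace y with x by lra. split; [exact Hhx | lra]. }
  set (l := (z - y) / (z - x)).
  assert (Hl : 0 <= l <= 1).
  { unfold l. split; [apply Rdiv_le_0_compat | apply Rle_div_l]; lra. }
  pose proof (h_lc x z l ltac:(lra) ltac:(lra) Hl) as H.
  replace (l * x + (1 - l) * z) with y in H by (unfold l; field; lra).
  unfold rpow, Rpower in H.
  destruct (Rlt_dec 0 (h x)); [|lra]. destruct (Rlt_dec 0 (h z)); [|lra].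
  rewrite <- exp_plus in H.
  pose proof (exp_pos (l * ln (h x) + (1 - l) * ln (h z))).
  split; [lra|].
  apply ln_le in H; [|assumption]. rewrite ln_exp in H.
  replace ((z - y) * ln (h x) + (y - x) * ln (h z))
    with ((z - x) * (l * ln (h x) + (1 - l) * ln (h z))) by (unfold l; field; lra).
  apply Rmult_le_compat_l; lra.
Qed.

Lemma log_concave_le_secant_ext s t d : 0 <= s < t -> 0 < d -> 0 < h s -> 0 < h t ->
  h (t + d) <= h t * exp (d * ln_slope h s t).
Proof.
  intros Hst Hd Hhs Hht.
  destruct (Req_dec (h (t + d)) 0) as [E | E].
  { rewrite E. pose proof (exp_pos (d * ln_slope h s t)). nra. }
  assert (Hhtd : 0 < h (t + d)) by (pose proof (h_nonneg (t + d)); lra).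
  destruct (log_concave_ln_chord s t (t + d) ltac:(lra) ltac:(lra) Hhs Hhtd) as [_ H].
  apply le_mul_exp_of_ln_le; [exact Hhtd | exact Hht |].
  replace (ln (h t) + d * ln_slope h s t)
    with (((t + d - s) * ln (h t) - d * ln (h s)) / (t - s)) by (unfold ln_slope; field; lra).
  apply Rle_div_r; lra.
Qed.

Lemma log_concave_secant_le t s d : 0 <= t -> 0 < d <= s - t -> 0 < h s -> 0 < h t ->
  h t * exp (d * ln_slope h t s) <= h (t + d).
Proof.
  intros Ht Hd Hhs Hht.
  destruct (log_concave_ln_chord t (t + d) s ltac:(lra) ltac:(lra) Hht Hhs) as [Hhtd H].
  rewrite <- (exp_ln (h (t + d))), <- (exp_ln (h t)), <- exp_plus by assumption.
  apply exp_le_exp.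
  replace (ln (h t) + d * ln_slope h t s)
    with (((s - t - d) * ln (h t) + d * ln (h s)) / (s - t)) by (unfold ln_slope; field; lra).
  apply Rle_div_l; lra.
Qed.

(* [Derive h t] is [0] when the difference quotients have no finite limit, so assuming
   [Derive h t <> 0] (true at t_p) replaces any differentiability hypothesis. *)
Lemma Derive_le_ln_slope s t : 0 <= s < t -> 0 < h s -> 0 < h t -> Derive h t <> 0 ->
  Derive h t / h t <= ln_slope h s t.
Proof.
  intros Hst Hhs Hht HD.
  apply Rle_div_l; [exact Hht|]. rewrite Rmult_comm.
  set (sl := ln_slope h s t).
  rewrite Derive_eq_Lim_diff_quot_seq in HD |- *.
  apply real_le_of_Rbar_le; [|exact HD].
  rewrite <- (is_lim_seq_unique _ _ (is_lim_seq_mul_exp_inv_seq (h t * sl) sl)).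
  apply Lim_seq_le_loc. exists 0%nat. intros k _.
  unfold diff_quot_seq. set (d := / (INR k + 1)).
  assert (Hd : 0 < d) by (apply Rinv_0_lt_compat; pose proof (pos_INR k); lra).
  pose proof (log_concave_le_secant_ext s t d Hst Hd Hhs Hht) as Hsec. fold sl in Hsec.
  pose proof (exp_sub1_le_mul_exp (d * sl)).
  apply Rle_div_l; [exact Hd|]. nra.
Qed.

Lemma ln_slope_le_Derive t s : 0 <= t < s -> 0 < h s -> 0 < h t -> Derive h t <> 0 ->
  ln_slope h t s <= Derive h t / h t.
Proof.
  intros Hts Hhs Hht HD.
  apply (Rle_div_r _ _ _ Hht).
  set (sl := ln_slope h t s).
  rewrite Derive_eq_Lim_diff_quot_seq in HD |- *.
  apply le_real_of_Rbar_le; [|exact HD].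
  rewrite <- (Lim_seq_const (sl * h t)).
  destruct (archimed_cor1 (s - t) ltac:(lra)) as [N [HN HN0]].
  apply Lim_seq_le_loc. exists N. intros k Hk.
  unfold diff_quot_seq. set (d := / (INR k + 1)).
  assert (Hd : 0 < d <= s - t).
  { apply le_INR in Hk. pose proof (lt_0_INR N ltac:(lia)).
    split; [apply Rinv_0_lt_compat; lra|].
    apply Rle_trans with (/ INR N); [apply Rinv_le_contravar|]; lra. }
  pose proof (log_concave_secant_le t s d ltac:(lra) Hd Hhs Hht) as Hsec. fold sl in Hsec.
  pose proof (exp_ineq1_le (d * sl)).
  apply (Rle_div_r _ _ d ltac:(lra)). nra.
Qed.

Lemma log_concave_le_tangent t s : 0 < t -> 0 < h t -> Derive h t <> 0 -> 0 <= s ->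
  h s <= h t * exp (Derive h t / h t * (s - t)).
Proof.
  intros Ht Hht HD Hs.
  destruct (Req_dec (h s) 0) as [E | E].
  { rewrite E. pose proof (exp_pos (Derive h t / h t * (s - t))). nra. }
  assert (Hhs : 0 < h s) by (pose proof (h_nonneg s Hs); lra).
  apply le_mul_exp_of_ln_le; [exact Hhs | exact Hht |].
  destruct (Rtotal_order s t) as [Hlt | [-> | Hgt]].
  - pose proof (Derive_le_ln_slope s t ltac:(lra) Hhs Hht HD) as H.
    unfold ln_slope in H. apply (Rle_div_r _ _ (t - s) ltac:(lra)) in H. lra.
  - lra.
  - pose proof (ln_slope_le_Derive t s ltac:(lra) Hhs Hht HD) as H.
    unfold ln_slope in H. apply (Rle_div_l _ _ (s - t) ltac:(lra)) in H. lra.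
Qed.

End LogConcave.

Lemma is_t_p_tangent_bound (h : R -> R) (p t : R) : 1 < p ->
  nonneg_on_halfline h -> log_concave_on_halfline h -> is_t_p p h t ->
  forall s, 0 <= s -> h s <= h t * exp (- (p - 1) / t * (s - t)).
Proof.
  intros Hp h_nonneg h_lc [Ht [Hht Hlog]] s Hs.
  rewrite <- Hlog. apply log_concave_le_tangent; try assumption.
  intros HD. rewrite HD in Hlog. unfold Rdiv in Hlog.
  rewrite Rmult_0_l in Hlog.
  pose proof (Rinv_0_lt_compat t Ht). nra.
Qed.

Lemma is_t_p_at_0_le (h : R -> R) (p t : R) : 1 < p ->
  nonneg_on_halfline h -> log_concave_on_halfline h -> is_t_p p h t ->
  h 0 <= exp (p - 1) * h t.
Proof.
  intros Hp h_nonneg h_lc Htp.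
  pose proof (is_t_p_tangent_bound h p t Hp h_nonneg h_lc Htp 0 (Rle_refl 0)) as H.
  destruct Htp as [Ht _].
  replace (- (p - 1) / t * (0 - t)) with (p - 1) in H by (field; lra).
  lra.
Qed.

Lemma le_three_mul_of_one_sub_sq_le_exp (k η X : R) :
  1 <= k -> 0 <= η <= 1 / 6 -> 0 <= X -> (1 - η) ^ 2 <= exp (- k * X) -> X <= 3 * η.
Proof.
  intros Hk Hη HX H.
  assert (Hexp : exp (- k * X) <= exp (- X)) by (apply exp_le_exp; nra).
  pose proof (one_add_mul_exp_neg_le1 X).
  assert (H1 : (1 - η) ^ 2 * (1 + X) <= 1).
  { apply Rle_trans with (exp (- X) * (1 + X)); [apply Rmult_le_compat_r|]; lra. }
  assert (H2 : X * (1 - 2 * η) <= 2 * η) by nra.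
  nra.
Qed.

Lemma one_sub_sq_le_exp_of_tangent_bounds (f g : R -> R) (k η tf tg : R) :
  0 < tf -> 0 < tg -> 0 < f tf -> 0 < g tg -> 0 <= η <= 1 ->
  (forall s, 0 <= s -> f s <= f tf * exp (- k / tf * (s - tf))) ->
  (forall s, 0 <= s -> g s <= g tg * exp (- k / tg * (s - tg))) ->
  (forall t, 0 <= t -> Rabs (f t - g t) <= η * Rmin (f tf) (g tg)) ->
  (1 - η) ^ 2 <= exp (- k * ((tg - tf) ^ 2 / (tf * tg))).
Proof.
  intros Htf Htg Hftf Hgtg Hη Sf Sg Hfg.
  set (E1 := exp (- k / tf * (tg - tf))).
  set (E2 := exp (- k / tg * (tf - tg))).
  assert (E12 : E1 * E2 = exp (- k * ((tg - tf) ^ 2 / (tf * tg)))).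
  { unfold E1, E2. rewrite <- exp_plus. f_equal. field. lra. }
  assert (Hf : (1 - η) * g tg <= f tg <= f tf * E1).
  { pose proof (Hfg tg ltac:(lra)) as H. apply Rabs_le_between' in H.
    assert (η * Rmin (f tf) (g tg) <= η * g tg) by (apply Rmult_le_compat_l, Rmin_r; lra).
    split; [lra | apply Sf; lra]. }
  assert (Hg : (1 - η) * f tf <= g tf <= g tg * E2).
  { pose proof (Hfg tf ltac:(lra)) as H. apply Rabs_le_between' in H.
    assert (η * Rmin (f tf) (g tg) <= η * f tf) by (apply Rmult_le_compat_l, Rmin_l; lra).
    split; [lra | apply Sg; lra]. }
  rewrite <- E12.
  apply Rmult_le_reg_r with (f tf * g tg); [nra|].
  replace ((1 - η) ^ 2 * (f tf * g tg)) with (((1 - η) * g tg) * ((1 - η) * f tf)) by ring.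
  replace (E1 * E2 * (f tf * g tg)) with ((f tf * E1) * (g tg * E2)) by ring.
  apply Rmult_le_compat; nra.
Qed.

Lemma sq_sub_le_of_tangent_bounds (f g : R -> R) (k η tf tg : R) :
  1 <= k -> 0 <= η <= 1 / 6 -> 0 < tf -> 0 < tg -> 0 < f tf -> 0 < g tg ->
  (forall s, 0 <= s -> f s <= f tf * exp (- k / tf * (s - tf))) ->
  (forall s, 0 <= s -> g s <= g tg * exp (- k / tg * (s - tg))) ->
  (forall t, 0 <= t -> Rabs (f t - g t) <= η * Rmin (f tf) (g tg)) ->
  (tg - tf) ^ 2 <= 3 * η * (tf * tg).
Proof.
  intros Hk Hη Htf Htg Hftf Hgtg Sf Sg Hfg.
  pose proof (one_sub_sq_le_exp_of_tangent_bounds f g k η tf tg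
                Htf Htg Hftf Hgtg ltac:(lra) Sf Sg Hfg) as H.
  apply le_three_mul_of_one_sub_sq_le_exp in H;
    [| lra | lra | apply Rdiv_le_0_compat; [apply pow2_ge_0 | nra]].
  apply (Rle_div_l _ _ (tf * tg) ltac:(nra)) in H. lra.
Qed.

Lemma close_of_sq_sub_le (a u v : R) : 0 <= a <= 1 -> 0 < u -> 0 < v ->
  (v - u) ^ 2 <= a ^ 2 / 2 * (u * v) -> (1 - a) * v <= u <= (1 + a) * v.
Proof.
  intros Ha Hu Hv H.
  assert (Hauv : a ^ 2 / 2 * (u * v) <= u * v / 2).
  { assert (a ^ 2 <= 1) by nra. pose proof (Rmult_lt_0_compat u v Hu Hv). nra. }
  assert (Huv : u <= 2 * v).
  { destruct (Rle_lt_dec u (2 * v)) as [|Hlt]; [assumption|].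
    assert (u * v / 2 < u ^ 2 / 4) by nra. nra. }
  assert (Hsq : (v - u) ^ 2 <= (a * v) ^ 2) by nra.
  assert (Habs : Rabs (v - u) <= a * v).
  { rewrite <- (Rabs_pos_eq (a * v)) by nra.
    apply Rsqr_le_abs_0. unfold Rsqr. lra. }
  apply Rabs_le_between' in Habs. lra.
Qed.

Theorem lemma4p4 (n : nat) (f g : R -> R) (tf tg : R) :
  (2 <= n)%nat ->
  nonneg_on_halfline f -> nonneg_on_halfline g ->
  continuous_on_halfline f -> continuous_on_halfline g ->
  log_concave_on_halfline f -> log_concave_on_halfline g ->
  C2_on_pos f -> C2_on_pos g ->
  0 < f 0 -> 0 < g 0 ->
  finite_positive_integral f -> finite_positive_integral g ->
  (forall t, 0 <= t -> Rabs (f t - g t) <= exp (- 5 * INR n) * Rmin (f 0) (g 0)) ->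
  is_t_p (INR n) f tf -> is_t_p (INR n) g tg ->
  (1 - exp (- INR n)) * tg <= tf /\ tf <= (1 + exp (- INR n)) * tg.
Proof.
  intros Hn f_nonneg g_nonneg _ _ f_lc g_lc _ _ _ _ _ _ Hfg Htf Htg.
  set (p := INR n) in *.
  assert (Hp : 2 <= p) by (apply (le_INR 2) in Hn; unfold p; simpl in Hn; lra).
  pose proof Htf as [tf_pos [ftf_pos _]]. pose proof Htg as [tg_pos [gtg_pos _]].
  set (a := exp (- p)).
  set (η := exp (- 5 * p) * exp (p - 1)).
  assert (Ha : 0 < a <= 1).
  { split; [apply exp_pos | rewrite <- exp_0; apply exp_le_exp; lra]. }
  assert (Hη : 0 <= η /\ 6 * η <= a ^ 2).
  { replace η with (a ^ 2 * exp (- (2 * p + 1)))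
      by (unfold η, a; simpl; rewrite Rmult_1_r, <- !exp_plus; f_equal; ring).
    pose proof (one_add_mul_exp_neg_le1 (2 * p + 1)).
    pose proof (exp_pos (- (2 * p + 1))). pose proof (pow2_ge_0 a).
    assert (6 * exp (- (2 * p + 1)) <= 1) by nra.
    split; nra. }
  assert (Htol : forall t, 0 <= t -> Rabs (f t - g t) <= η * Rmin (f tf) (g tg)).
  { intros t Ht. eapply Rle_trans; [apply Hfg, Ht|].
    unfold η. rewrite Rmult_assoc.
    apply Rmult_le_compat_l; [left; apply exp_pos|].
    rewrite Rmult_min_distr_l by (left; apply exp_pos).
    eapply Rle_trans; [apply Rle_min_compat_r | apply Rle_min_compat_l];
      eapply is_t_p_at_0_le; eauto; lra. }
  pose proof (sq_sub_le_of_tangent_bounds f g (p - 1) η tf tg ltac:(lra) ltac:(nra)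
    tf_pos tg_pos ftf_pos gtg_pos
    (is_t_p_tangent_bound f p tf ltac:(lra) f_nonneg f_lc Htf)
    (is_t_p_tangent_bound g p tg ltac:(lra) g_nonneg g_lc Htg) Htol).
  apply close_of_sq_sub_le; [lra | lra | lra |].
  assert (3 * η * (tf * tg) <= a ^ 2 / 2 * (tf * tg)) by (apply Rmult_le_compat_r; nra).
  lra.
Qed.
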